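(* Let $w$ be a bounded positive function on $\mathbb{T}$ such that $\log w$ is integrable, and fix $0<\delta<1$. If there is $\varepsilon\in(0,\delta)$ such that $\operatorname{dist}\big(L_w^+(\delta),L_w^-(\varepsilon)\big)>0$, then $w$ is an apical Helson--Szegő weight at level $\delta$.
   Context: $\mathbb{T}$ is the unit circle with normalized Lebesgue measure. For a bounded $\psi$ and $0\le\delta\le1$, $L_\psi^+(\delta)=\{e^{i\theta}\in\mathbb{T}: |\psi(e^{i\theta})|\ge\|\psi\|_\infty\delta\}$ and $L_\psi^-(\delta)=\{e^{i\theta}\in\mathbb{T}: |\psi(e^{i\theta})|<\|\psi\|_\infty\delta\}$; $\operatorname{dist}$ is the distance between subsets of $\mathbb{T}$. For real $v\in L^1(\mathbb{T})$, $\tilde v$ denotes its conjugate function. A bounded positive function $w$ on $\mathbb{T}$ is an apical Helson--Szegő weight at level $\delta$ if $w=\exp(u+v)$ where $u\in L^\infty(\mathbb{T})$ and $v\in L^1(\mathbb{T})$ are real-valued and $\operatorname{ess\,sup}_{L_w^+(\delta)}|\tilde v|<\pi/2$. *)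

(* The unit circle T is modelled by 2*pi-periodic
   functions on R; the normalized measure on T corresponds to (1/(2 pi)) times
   Lebesgue measure on one period. Null sets / ess sup do not depend on the
   normalisation. *)
From HB Require Import structures.
From mathcomp Require Import all_boot all_order all_algebra.
From mathcomp Require Import all_classical all_reals all_analysis ess_sup_inf.
Set Implicit Arguments. Unset Strict Implicit. Unset Printing Implicit Defensive.
Import Order.TTheory GRing.Theory Num.Theory.
Import numFieldNormedType.Exports.
Local Open Scope classical_set_scope.
Local Open Scope ring_scope.

Section defs.
Variable R : realType.
Notation leb := (@lebesgue_measure R).

Definition periodic2pi (f : R -> R) := forall x, f (x + 2 * pi) = f x.

(* ||w||_oo : essential supremum of |w| (over R, equivalently over a period) *)
Definition sup_norm (w : R -> R) : R := fine (ess_sup leb (fun x => (`|w x|)%:E)).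

Definition Lplus (w : R -> R) (d : R) : set R :=
  [set x | sup_norm w * d <= `|w x|].
Definition Lminus (w : R -> R) (d : R) : set R :=
  [set x | `|w x| < sup_norm w * d].

(* chordal distance |e^{ia} - e^{ib}| between points of T *)
Definition chord (a b : R) : R :=
  Num.sqrt ((cos a - cos b) ^+ 2 + (sin a - sin b) ^+ 2).

Definition dist_pos (A B : set R) : Prop :=
  exists2 r : R, 0 < r & forall a b, A a -> B b -> r <= chord a b.

Definition conj_trunc (v : R -> R) (x : R) (e : R) : R :=
  (2 * pi)^-1 * fine (\int[leb]_(t in [set t : R | (e <= `|t| <= pi)%R])
                        (v (x - t) * (cos (t / 2) / sin (t / 2)))%:E)%E.

Definition conj_at (v : R -> R) (x l : R) : Prop :=
  conj_trunc v x e @[e --> 0^'+] --> l.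

Definition apical_HS (w : R -> R) (d : R) : Prop :=
  exists u v : R -> R,
    [/\ periodic2pi u /\ periodic2pi v,
        (measurable_fun setT u /\ exists M : R, {ae leb, forall x, `|u x| <= M}),
        leb.-integrable `[(- pi)%R, pi] (EFin \o v),
        {ae leb, forall x, w x = expR (u x + v x)} &
        (exists2 c : R, c < pi / 2 &
          {ae leb, forall x, Lplus w d x ->
             exists l, conj_at v x l /\ `|l| <= c})].
End defs.

(* Split log w = u + v, where v is log w on {w < eta} and 0 elsewhere. Then u is
   bounded (between log eta and log sup w), and by dominated convergence the L^1 norm
   of v over a period is as small as we like when eta -> 0. Taking eta <= eps ||w||
   puts {w < eta} inside L^-(eps), so v vanishes on an arc of fixed half-length a
   around every point of L^+(delta), a coming from the positive distance. There the
   principal value defining the conjugate of v equals the integral truncated at a,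
   which |cot(t/2)| <= 1/sin(a/2) bounds by ||v||_1 / (pi sin(a/2)); asking
   ||v||_1 <= sin(a/2) gives the bound 1/pi < pi/2. *)

From HB Require Import structures.
From mathcomp Require Import all_boot all_order all_algebra.
From mathcomp Require Import all_classical all_reals all_analysis.
From mathcomp Require Import ess_sup_inf lra ring measurable_realfun.
Set Implicit Arguments. Unset Strict Implicit. Unset Printing Implicit Defensive.
Import Order.TTheory GRing.Theory Num.Theory.
Import numFieldNormedType.Exports.
Local Open Scope classical_set_scope.
Local Open Scope ring_scope.

Section reflection.
Variable R : realType.
Notation leb := (@lebesgue_measure R).

Definition reflection (a x : R) : R := a - x.

Lemma measurable_reflection a : measurable_fun setT (reflection a).
Proof.
apply: continuous_measurable_fun => x.
by apply: continuousB; [exact: cst_continuous|exact: cvg_id].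
Qed.

Lemma pushforward_reflection a A : measurable A ->
  pushforward leb (reflection a : R -> measurableTypeR R) A = leb A.
Proof.
move=> mA; apply/esym/lebesgue_measure_unique => //=.
  by move=> ? ? ?; exact: measurable_reflection.
move=> _ _ [[c d]] _ <-; rewrite /pushforward.
have -> : reflection a @^-1` `]c, d] = `[a - d, a - c[%classic.
  by apply/seteqP; split => x /=; rewrite !in_itv /= /reflection => /andP[? ?];
    apply/andP; split; lra.
rewrite !lebesgue_measure_itv /= !lte_fin.
have -> : (a - d < a - c) = (c < d) by apply/idP/idP; lra.
by case: ifP => // _; rewrite -!EFinB; congr (_%:E); lra.
Qed.

Local Open Scope ereal_scope.

Lemma ge0_integral_reflection a (D : set R) (f : R -> \bar R) :
  measurable D -> measurable_fun D f -> (forall x, D x -> 0 <= f x) ->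
  \int[leb]_(x in D) f x = \int[leb]_(x in reflection a @^-1` D) f (a - x)%R.
Proof.
move=> mD mf f0.
transitivity (\int[pushforward leb (reflection a : R -> measurableTypeR R)]_(x in D) f x).
  apply: eq_measure_integral => //=; first exact: measurable_reflection.
  by move=> _ A mA _; rewrite pushforward_reflection.
rewrite ge0_integral_pushforward //; first exact: measurable_reflection.
by move=> y /set_mem; exact: f0.
Qed.

Lemma ge0_integral_reflection_itv a b c b' c' (g : R -> R) :
  measurable_fun setT g -> (forall x, (0 <= g x)%R) ->
  (a - c = b')%R -> (a - b = c')%R ->
  \int[leb]_(t in `[b, c]) (g (a - t))%:E = \int[leb]_(t in `[b', c']) (g t)%:E.
Proof.
move=> mg g0 <- <-; rewrite [RHS](ge0_integral_reflection a) //.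
- congr (integral _ _ _); apply/seteqP; split => t /=;
    rewrite !in_itv /= /reflection => /andP[? ?]; apply/andP; split; lra.
- by apply/measurable_EFinP; exact: measurable_funS mg.
- by move=> *; rewrite lee_fin.
Qed.

End reflection.

Section periodic.
Variable R : realType.
Notation leb := (@lebesgue_measure R).

Lemma periodic2pi_intr (f : R -> R) : periodic2pi f ->
  forall (k : int) x, f (x + 2 * pi * k%:~R) = f x.
Proof.
have pn n x : periodic2pi f -> f (x + 2 * pi * n%:R) = f x.
  by move=> pf; rewrite mulr_natr; exact: periodicn.
move=> pf [n|n] x; first by rewrite pmulrn pn.
by rewrite NegzE mulrNz mulrN -(pn n.+1 (x - _)) // subrK.
Qed.

Lemma periodic2pi_reduce (f : R -> R) : periodic2pi f ->
  forall x, exists2 y, 0 <= y <= 2 * pi & forall t, f (x - t) = f (y - t).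
Proof.
move=> pf x; have pi0 := pi_gt0 R.
set k := Num.floor (x / (2 * pi)).
exists (x - 2 * pi * k%:~R); last first.
  by move=> t; rewrite -(periodic2pi_intr pf k (x - _ - t)); congr f; ring.
have /andP[kx xk] := floor_itv (x / (2 * pi)); rewrite -/k intrD in kx xk.
have -> : x = x / (2 * pi) * (2 * pi) by rewrite mulfVK //; apply/eqP; lra.
set q := x / (2 * pi) in kx xk *.
have : 0 <= (q - k%:~R) * (2 * pi) by apply: mulr_ge0; lra.
have : 0 <= (k%:~R + 1 - q) * (2 * pi) by apply: mulr_ge0; lra.
move=> ? ?; apply/andP; split; nra.
Qed.

Local Open Scope ereal_scope.

Lemma ge0_integral_periodic2pi_shift_le (g : R -> R) x :
  periodic2pi g -> measurable_fun setT g -> (forall t, (0 <= g t)%R) ->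
  \int[leb]_(t in `[(- pi)%R, pi]) (g (x - t))%:E <=
  \int[leb]_(t in `[(- pi)%R, pi]) (g t)%:E + \int[leb]_(t in `[(- pi)%R, pi]) (g t)%:E.
Proof.
move=> pg mg g0; have pi0 := pi_gt0 R.
have mG (D : set R) : measurable D -> measurable_fun D (EFin \o g).
  by move=> mD; apply/measurable_EFinP; exact: measurable_funS mg.
have [y /andP[y0 y2pi] gy] := periodic2pi_reduce pg x.
under eq_integral do rewrite gy.
rewrite (ge0_integral_reflection_itv (b' := (y - pi)%R) (c' := (y + pi)%R)) //; last by rewrite opprK.
apply: (@le_trans _ _ (\int[leb]_(t in `[(- pi)%R, (3 * pi)%R]) (g t)%:E)).
  apply: ge0_subset_integral => //; [exact: mG|by move=> *; rewrite lee_fin|].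
  by move=> t /=; rewrite !in_itv /= => /andP[? ?]; apply/andP; split; lra.
have -> : `[(- pi)%R, (3 * pi)%R]%classic =
    `[(- pi)%R, pi]%classic `|` `]pi, (3 * pi)%R]%classic :> set R.
  apply/seteqP; split => t /=; rewrite !in_itv /=; last first.
    by case=> /andP[? ?]; apply/andP; split; lra.
  move=> /andP[? ?]; case: (lerP t pi) => ?; [left|right]; apply/andP; split; lra.
rewrite ge0_integral_setU //; last 3 first.
- by apply: mG; exact: measurableU.
- by move=> *; rewrite lee_fin.
- rewrite disj_set2E; apply/eqP/seteqP; split => t //=.
  by rewrite !in_itv /= => -[/andP[? ?] /andP[? ?]]; lra.
apply: leeD => //.
apply: (@le_trans _ _ (\int[leb]_(t in `[pi, (3 * pi)%R]) (g t)%:E)).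
  apply: ge0_subset_integral => //; [exact: mG|by move=> *; rewrite lee_fin|].
  by move=> t /=; rewrite !in_itv /= => /andP[? ?]; apply/andP; split; lra.
rewrite -(ge0_integral_reflection_itv (a := (2 * pi)%R) (b := (- pi)%R) (c := pi)) //; [|ring|ring].
rewrite -[X in _ <= X](ge0_integral_reflection_itv (a := 0%R) (b := (- pi)%R) (c := pi)) //; [|ring|ring].
rewrite le_eqVlt; apply/orP; left; apply/eqP/eq_integral => t _.
by rewrite -[in RHS]pg; congr (g _)%:E; ring.
Qed.

End periodic.

Section trigonometry.
Variable R : realType.

Lemma chord_sub (a t : R) : chord a (a - t) = Num.sqrt (2 - 2 * cos t).
Proof.
rewrite /chord cosB sinB; congr Num.sqrt.
have ca := cos2Dsin2 a; have ct := cos2Dsin2 t.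
transitivity ((cos a ^+ 2 + sin a ^+ 2) * (2 - 2 * cos t - (1 - (cos t ^+ 2 + sin t ^+ 2))));
  first by ring.
by rewrite ca ct; ring.
Qed.

Lemma chord_sub_lt (r : R) : 0 < r ->
  exists2 a, 0 < a < pi & forall x t, `|t| < a -> chord x (x - t) < r.
Proof.
move=> r0; have r20 : 0 < r ^+ 2 by exact: exprn_gt0.
set y := Num.max (1 - r ^+ 2 / 2) 0.
have y0 : 0 <= y by rewrite le_max lexx orbT.
have y1 : y < 1 by rewrite gt_max ltr01 andbT; lra.
have ry : 1 - r ^+ 2 / 2 <= y by rewrite le_max lexx.
have ay : 0 <= acos y <= pi by rewrite acos_ge0 ?acos_lepi //; apply/andP; split; lra.
exists (acos y).
  by rewrite acos_gt0 ?acos_ltpi //; apply/andP; split; lra.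
move=> x t ta; rewrite chord_sub -[r]gtr0_norm // -sqrtr_sqr ltr_sqrt //.
have : y < cos t.
  rewrite -cos_norm -[X in X < _]acosK ?in_itv /=; last by apply/andP; split; lra.
  have t0 := normr_ge0 t; case/andP: ay => ? ?.
  by rewrite ltr_cos // in_itv /=; apply/andP; split; lra.
lra.
Qed.

Lemma sin_half_gt0 (e : R) : 0 < e <= pi -> 0 < sin (e / 2).
Proof.
by move=> /andP[? ?]; apply: sin_gt0_pi; apply/andP; split; lra.
Qed.

Lemma sin_half_norm (t : R) : `|t| <= pi -> `|sin (t / 2)| = sin (`|t| / 2).
Proof.
move=> tpi; have pi0 := pi_gt0 R.
have [t0|t0] := lerP 0 t.
  rewrite !ger0_norm //; apply: sin_ge0_pi; rewrite ger0_norm in tpi; lra.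
rewrite ltr0_norm ?(ltr0_norm t0) ?mulNr ?sinN //.
rewrite -oppr_gt0 -sinN -mulNr; apply: sin_gt0_pi; rewrite ltr0_norm in tpi; lra.
Qed.

Lemma ler_sin : {in `[- (pi / 2), pi / 2] &, {mono (@sin R) : x y / x <= y}}.
Proof. by apply: le_mono_in => x y xI yI; rewrite ltr_sin. Qed.

Lemma sin_half_le_norm (e t : R) : 0 <= e <= `|t| -> `|t| <= pi ->
  sin (e / 2) <= `|sin (t / 2)|.
Proof.
move=> /andP[e0 et] tpi; have pi0 := pi_gt0 R.
rewrite sin_half_norm // ler_sin ?in_itv /=; first lra.
- by apply/andP; split; lra.
- by apply/andP; split; lra.
Qed.

Definition cot_half (t : R) : R := cos (t / 2) / sin (t / 2).

Lemma norm_cot_half_le (e t : R) : 0 < e <= `|t| -> `|t| <= pi ->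
  `|cot_half t| <= (sin (e / 2))^-1.
Proof.
move=> /andP[e0 et] tpi.
have se0 : 0 < sin (e / 2) by apply: sin_half_gt0; apply/andP; split => //; lra.
have ste : sin (e / 2) <= `|sin (t / 2)|.
  by apply: sin_half_le_norm => //; rewrite et ltW.
rewrite normrM normfV -[X in _ <= X]mul1r.
apply: ler_pM => //; first exact: cos_max.
by rewrite lef_pV2 ?posrE //; exact: lt_le_trans ste.
Qed.

End trigonometry.

Section conjugate.
Variable R : realType.
Notation leb := (@lebesgue_measure R).

Definition trunc_domain (e : R) : set R := [set t | e <= `|t| <= pi].

Lemma measurable_trunc_domain e : measurable (trunc_domain e).
Proof.
have -> : trunc_domain e = (fun t : R => `|t|) @^-1` `[e, pi].
  by apply/seteqP; split => t /=; rewrite in_itv.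
rewrite -[X in measurable X]setTI.
by apply: (@normr_measurable R setT) => //; exact: measurable_itv.
Qed.

Lemma measurable_cot_half e : 0 < e -> measurable_fun (trunc_domain e) (@cot_half R).
Proof.
move=> e0.
pose O := (fun t : R => sin (t / 2)) @^-1` [set y : R | y != 0].
have half_cont t : {for t, continuous (fun t : R => t / 2)}.
  by apply: continuousM; [exact: cvg_id|exact: cvg_cst].
have sin_half_cont : continuous (fun t : R => sin (t / 2)).
  by move=> t; apply: continuous_comp; [exact: half_cont|exact: continuous_sin].
have cos_half_cont : continuous (fun t : R => cos (t / 2)).
  by move=> t; apply: continuous_comp; [exact: half_cont|exact: continuous_cos].
have oO : open O by apply: open_comp; [move=> t _; exact: sin_half_cont|exact: open_neq].
apply: (measurable_funS (open_measurable oO)).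
  move=> t /andP[et tpi]; rewrite /O /= -normr_gt0.
  have se : 0 < sin (e / 2) by apply: sin_half_gt0; rewrite e0 (le_trans et).
  by apply: lt_le_trans se (sin_half_le_norm _ tpi); rewrite et ltW.
apply: open_continuous_measurable_fun => // t /set_mem Ot.
apply: (@continuousM _ _ (fun t : R => cos (t / 2)) (fun t : R => (sin (t / 2))^-1)).
  exact: cos_half_cont.
by apply: continuousV => //; exact: sin_half_cont.
Qed.

Lemma conj_trunc_eq (v : R -> R) x a e :
  (forall t, `|t| < a -> v (x - t) = 0) -> e <= a ->
  conj_trunc v x e = conj_trunc v x a.
Proof.
move=> v0 ea; rewrite /conj_trunc; congr (_ * fine _).
rewrite [LHS]integral_mkcond [RHS]integral_mkcond; apply: eq_integral => t _.
rewrite /patch /=.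
have [ta|ta] := lerP a `|t|.
  have [tpi|tpi] := lerP `|t| pi.
    by rewrite !mem_set //; apply/andP; split => //; exact: le_trans ea ta.
  by rewrite !memNset //= => /andP[_ /(lt_le_trans tpi)]; rewrite ltxx.
rewrite [in RHS]memNset; last by move=> /andP[/(lt_le_trans ta)]; rewrite ltxx.
by case: ifP => // _; rewrite v0 // mul0r.
Qed.

Lemma conj_at_trunc (v : R -> R) x a : 0 < a ->
  (forall t, `|t| < a -> v (x - t) = 0) -> conj_at v x (conj_trunc v x a).
Proof.
move=> a0 v0; apply: cvg_near_cst.
near=> e; apply: conj_trunc_eq => //.
near: e; exact: nbhs_right_ltW.
Unshelve. all: by end_near.
Qed.

Local Open Scope ereal_scope.

Lemma abse_integral_trunc_domain_le (v : R -> R) x a :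
  measurable_fun setT v -> (0 < a <= pi)%R ->
  `|\int[leb]_(t in trunc_domain a) (v (x - t) * cot_half t)%:E| <=
  (sin (a / 2))^-1%:E * \int[leb]_(t in `[(- pi)%R, pi]) (`|v (x - t)|)%:E.
Proof.
move=> mv /andP[a0 api].
have sa : (0 <= (sin (a / 2))^-1)%R.
  by rewrite invr_ge0 ltW // sin_half_gt0 // a0.
have mvx : measurable_fun setT (fun t : R => v (x - t)%R).
  exact: measurableT_comp mv (measurable_reflection x).
have mnvx (D : set R) : measurable D -> measurable_fun D (fun t => (`|v (x - t)|)%:E).
  move=> mD; apply/measurable_EFinP; apply: measurableT_comp; first exact: normr_measurable.
  exact: measurable_funS mvx.
have mva : measurable_fun (trunc_domain a) (fun t => v (x - t) * cot_half t)%R.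
  apply: measurable_funM; last exact: measurable_cot_half.
  exact: measurable_funS mvx.
apply: le_trans (le_abse_integral leb (measurable_trunc_domain a) _) _.
  exact/measurable_EFinP.
rewrite -ge0_integralZl_EFin //; last exact: mnvx.
have mB (D : set R) : measurable D ->
    measurable_fun D (fun t => ((sin (a / 2))^-1 * `|v (x - t)|)%:E).
  move=> mD; apply/measurable_EFinP; apply: measurable_funM; first exact: measurable_cst.
  by apply/measurable_EFinP; exact: mnvx.
apply: (@le_trans _ _ (\int[leb]_(t in trunc_domain a) ((sin (a / 2))^-1 * `|v (x - t)|)%:E)).
  apply: ge0_le_integral; first exact: measurable_trunc_domain.
  - by move=> *; exact: abse_ge0.
  - by apply: measurableT_comp => //; exact/measurable_EFinP.
  - exact: mB (measurable_trunc_domain a).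
  - move=> t /andP[ta tpi]; rewrite lee_fin normrM mulrC ler_wpM2r //.
    by apply: norm_cot_half_le; rewrite ?a0.
apply: ge0_subset_integral; [exact: measurable_trunc_domain|by []|exact: mB| |].
- by move=> *; rewrite lee_fin mulr_ge0.
- by move=> t /andP[_ tpi]; rewrite /= in_itv /= -ler_norml.
Qed.

Local Close Scope ereal_scope.

Lemma norm_conj_trunc_le (v : R -> R) x a d :
  periodic2pi v -> measurable_fun setT v -> 0 < a <= pi ->
  (\int[leb]_(t in `[(- pi)%R, pi]) (`|v t|)%:E <= d%:E)%E ->
  `|conj_trunc v x a| <= d / (pi * sin (a / 2)).
Proof.
move=> pv mv a_itv vL1; have pi0 := pi_gt0 R.
have sa0 : 0 < sin (a / 2) by exact: sin_half_gt0.
have shift := @ge0_integral_periodic2pi_shift_le _ (fun t => `|v t|) x.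
have := abse_integral_trunc_domain_le x mv a_itv; rewrite /conj_trunc.
set J := (\int[leb]_(t in _) _)%E => JK.
have {}JK : (`|J| <= ((sin (a / 2))^-1 * (d + d))%:E)%E.
  apply: le_trans JK _; rewrite EFinM EFinD lee_wpmul2l //.
    by rewrite lee_fin invr_ge0 ltW.
  apply: le_trans (leeD vL1 vL1); apply: shift => //; first by move=> t /=; rewrite pv.
  by apply: measurableT_comp => //; exact: normr_measurable.
have {}JK : `|fine J| <= (sin (a / 2))^-1 * (d + d).
  by move: JK; case: J => [r| |] //=; rewrite lee_fin.
rewrite normrM gtr0_norm ?invr_gt0 ?mulr_gt0 //.
have -> : d / (pi * sin (a / 2)) = (2 * pi)^-1 * ((sin (a / 2))^-1 * (d + d)).
  by field; apply/andP; split; apply/eqP; lra.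
by rewrite ler_wpM2l // invr_ge0 mulr_ge0 // ltW.
Qed.

Lemma conj_at_le_of_vanishing (v : R -> R) x a d :
  periodic2pi v -> measurable_fun setT v -> 0 < a <= pi ->
  (\int[leb]_(t in `[(- pi)%R, pi]) (`|v t|)%:E <= d%:E)%E ->
  (forall t, `|t| < a -> v (x - t) = 0) ->
  exists l, conj_at v x l /\ `|l| <= d / (pi * sin (a / 2)).
Proof.
move=> pv mv a_itv vL1 v0; exists (conj_trunc v x a); split.
  by apply: conj_at_trunc v0; case/andP: a_itv.
exact: norm_conj_trunc_le.
Qed.

End conjugate.

Section weight.
Variable R : realType.
Notation leb := (@lebesgue_measure R).

Lemma sup_norm_gt0 (w : R -> R) : (exists M, forall x, w x <= M) ->
  (forall x, 0 < w x) -> 0 < sup_norm w.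
Proof.
move=> [M wM] w0.
set E := ess_sup leb (fun x => (`|w x|)%:E).
have EM : (E <= M%:E)%E.
  by apply/ess_supP; apply: aeW => x; rewrite lee_fin gtr0_norm.
rewrite /sup_norm -/E ltNge; apply/negP => E0.
have {}E0 : (E <= 0)%E by move: EM E0; case: E => [r| |] //= _; rewrite lee_fin.
have /ess_supP [N [mN N0 sN]] := E0.
have sub01 : `[0%R, 1%R]%classic `<=` N.
  move=> x _; apply: sN => /=; rewrite lee_fin normr_le0 => /eqP wx.
  by have := w0 x; rewrite wx ltxx.
have : (leb `[0%R, 1%R]%classic <= leb N)%E.
  exact: (le_measure leb (mem_set (measurable_itv `[0%R, 1%R])) (mem_set mN) sub01).
by rewrite N0 lebesgue_measure_itv /= lte_fin ltr01 sube0 lee_fin ler10.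
Qed.

Definition low_log (w : R -> R) (eta x : R) : R :=
  if w x < eta then ln (w x) else 0.

Lemma measurable_low_log (w : R -> R) eta :
  measurable_fun setT w -> measurable_fun setT (low_log w eta).
Proof.
move=> mw; apply: measurable_fun_ifT.
- by apply: measurable_fun_ltr => //; exact: measurable_cst.
- exact: measurableT_comp (@measurable_ln R) mw.
- exact: measurable_cst.
Qed.

Lemma low_log_eq0 (w : R -> R) eta x : eta <= w x -> low_log w eta x = 0.
Proof. by rewrite /low_log leNgt => /negbTE ->. Qed.

Lemma norm_low_log_le (w : R -> R) eta x : `|low_log w eta x| <= `|ln (w x)|.
Proof. by rewrite /low_log; case: ifP => // _; rewrite normr0. Qed.

Lemma norm_ln_sub_low_log_le (w : R -> R) eta M x : 0 < eta -> 0 < w x <= M ->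
  `|ln (w x) - low_log w eta x| <= Num.max `|ln eta| `|ln M|.
Proof.
move=> eta0 /andP[wx0 wxM]; rewrite /low_log.
case: ifPn => [_|]; first by rewrite subrr normr0 le_max normr_ge0.
rewrite -leNgt subr0 => etaw.
have le_eta : ln eta <= ln (w x) by rewrite ler_ln ?posrE.
have le_M : ln (w x) <= ln M by rewrite ler_ln ?posrE // (lt_le_trans wx0).
rewrite le_max; have [lnw0|lnw0] := lerP 0 (ln (w x)).
  by rewrite ger0_norm // (le_trans le_M (ler_norm _)) orbT.
by rewrite ltr0_norm // -[`|ln eta|]normrN (le_trans _ (ler_norm _)) // lerN2.
Qed.

Lemma integrable_low_log (w : R -> R) eta (D : set R) :
  measurable D -> measurable_fun setT w ->
  leb.-integrable D (fun x => (ln (w x))%:E) -> leb.-integrable D (EFin \o low_log w eta).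
Proof.
move=> mD mw iL; apply: le_integrable iL => //.
  by apply/measurable_EFinP; exact: measurable_funS (measurable_low_log _ mw).
by move=> x _ /=; rewrite lee_fin norm_low_log_le.
Qed.

Local Open Scope ereal_scope.

Lemma low_log_L1_small (w : R -> R) (eta0 d : R) :
  measurable_fun setT w -> (forall x, (0 < w x)%R) ->
  leb.-integrable `[(- pi)%R, pi] (fun x => (ln (w x))%:E) ->
  (0 < eta0)%R -> (0 < d)%R ->
  exists2 eta, (0 < eta <= eta0)%R &
    \int[leb]_(x in `[(- pi)%R, pi]) (`|low_log w eta x|)%:E < d%:E.
Proof.
move=> mw w0 iL eta00 d0.
pose eta_ (n : nat) := (eta0 / n.+1%:R)%R.
pose f_ n x := (`|low_log w (eta_ n) x|)%:E.
have mf n : measurable_fun `[(- pi)%R, pi] (f_ n).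
  apply/measurable_EFinP; apply: measurableT_comp; first exact: normr_measurable.
  exact: measurable_funS (measurable_low_log _ mw).
have := @dominated_convergence _ _ R leb _ (measurable_itv `[(- pi)%R, pi])
  f_ (cst 0) (fun x => (`|ln (w x)|)%:E) mf (measurable_cst _); case.
- apply: aeW => x _; apply: cvg_near_cst; near=> n.
  rewrite /f_ low_log_eq0 ?normr0 // /eta_ ler_pdivrMr //.
  near: n; apply: filterS (nbhs_infty_ger (eta0 / w x)) => n.
  by rewrite ler_pdivrMr // -natr1 => ?; have := w0 x; nra.
- exact: integrable_abse iL.
- by apply: aeW => x n _; rewrite /f_ /= lee_fin normr_id norm_low_log_le.
- move=> _ _; rewrite integral0 => /fine_cvgP [f_fin f_cvg].
  have [N _ fN] := filterI f_fin (cvgr_lt _ f_cvg _ d0).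
  exists (eta_ N).
    rewrite /eta_ divr_gt0 //= ler_pdivrMr //.
    by apply: ler_peMr; [exact: ltW|rewrite ler1n].
  have [/= fin_N lt_N] := fN N (leqnn N).
  by rewrite -(fineK fin_N) lte_fin.
Unshelve. all: by end_near.
Qed.

End weight.

Theorem lemma1 (R : realType) (w : R -> R) (delta : R) :
  periodic2pi w ->
  measurable_fun setT w ->
  (exists M : R, forall x, w x <= M) ->
  (forall x, 0 < w x) ->
  (@lebesgue_measure R).-integrable `[(- pi)%R, pi] (fun x => (ln (w x))%:E) ->
  0 < delta < 1 ->
  (exists eps : R, 0 < eps < delta /\
     dist_pos (Lplus w delta) (Lminus w eps)) ->
  apical_HS w delta.
Proof.
move=> pw mw [M wM] w0 iL _ [eps [/andP[eps0 _] [r r0 far]]].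
have [a /andP[a0 api] chord_lt] := chord_sub_lt r0.
have a_itv : 0 < a <= pi by rewrite a0 ltW.
have sa0 := sin_half_gt0 a_itv.
have epsw0 := mulr_gt0 eps0 (sup_norm_gt0 (ex_intro _ M wM) w0).
have [eta /andP[eta0 eta_le] vL1] := low_log_L1_small mw w0 iL epsw0 sa0.
set v := low_log w eta.
have pv : periodic2pi v by move=> x; rewrite /v /low_log pw.
have mv : measurable_fun setT v := measurable_low_log eta mw.
have v_far x : Lplus w delta x -> forall t, `|t| < a -> v (x - t) = 0.
  move=> Lx t ta; apply: low_log_eq0; rewrite leNgt; apply/negP => wt.
  have Lt : Lminus w eps (x - t).
    by rewrite /Lminus /= gtr0_norm // (lt_le_trans wt) // mulrC.
  by have := far _ _ Lx Lt; have := chord_lt x t ta; lra.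
exists (fun x => ln (w x) - v x), v; split.
- by split => // x; rewrite pw pv.
- split; first exact: measurable_funB (measurableT_comp (@measurable_ln R) mw) mv.
  exists (Num.max `|ln eta| `|ln M|); apply: aeW => x.
  by apply: norm_ln_sub_low_log_le; rewrite ?w0 ?wM.
- exact: integrable_low_log.
- by apply: aeW => x; rewrite subrK lnK // posrE.
exists (sin (a / 2) / (pi * sin (a / 2))).
  have pi2 := pi_ge2 R; have ps0 := mulr_gt0 (pi_gt0 R) sa0.
  rewrite ltr_pdivrMr //; nra.
apply: aeW => x Lx; apply: conj_at_le_of_vanishing => //; first exact: ltW.
exact: v_far.
Qed.
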